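(* Let $A_0\subseteq A$ be a finite extension of $k$-algebras, i.e. $A$ is finitely generated both as a left and as a right $A_0$-module. Then a two-sided ideal $I$ of $A$ has finite $k$-codimension in $A$ if and only if there exists a two-sided ideal $I_0$ of $A_0$ of finite $k$-codimension in $A_0$ such that $I_0\subseteq I$.
   Context: $k$ is a field; algebras are unital associative $k$-algebras. *)

From HB Require Import structures.
From mathcomp Require Import all_boot all_order all_algebra.
Set Implicit Arguments. Unset Strict Implicit. Unset Printing Implicit Defensive.
Import GRing.Theory.
Local Open Scope ring_scope.

Section Defs.
Variables (k : fieldType) (A : algType k).

Definition is_subalgebra (S : A -> Prop) : Prop :=
  [/\ S 1,
      (forall x y, S x -> S y -> S (x + y)),
      (forall (c : k) x, S x -> S (c *: x)) &
      (forall x y, S x -> S y -> S (x * y))].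

(* I is a two-sided ideal of the subalgebra S (as a subset of A). For S = A
   this is an ordinary two-sided ideal of A. *)
Definition is_two_sided_ideal_in (S I : A -> Prop) : Prop :=
  [/\ (forall x, I x -> S x),
      I 0,
      (forall x y, I x -> I y -> I (x + y)),
      (forall a x, S a -> I x -> I (a * x)) &
      (forall a x, S a -> I x -> I (x * a))].

Definition fin_gen_left (S : A -> Prop) : Prop :=
  exists s : seq A, forall a : A, exists b : nat -> A,
    (forall i, S (b i)) /\ a = \sum_(i < size s) b i * s`_i.

Definition fin_gen_right (S : A -> Prop) : Prop :=
  exists s : seq A, forall a : A, exists b : nat -> A,
    (forall i, S (b i)) /\ a = \sum_(i < size s) s`_i * b i.

(* I has finite k-codimension in S: the quotient S/I is spanned over k by the
   classes of finitely many elements of S. *)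
Definition finite_codim (S I : A -> Prop) : Prop :=
  exists s : seq A, (forall i, (i < size s)%N -> S s`_i) /\
    forall a, S a -> exists c : nat -> k,
      I (a - \sum_(i < size s) c i *: s`_i).

End Defs.

(* (=>) A0/(A0 ∩ I) embeds into A/I, so A0 ∩ I is an ideal of A0 of finite
   codimension; the only work is to pick spanning representatives inside A0.
   (<=) If A = Σ A0 s_i and A0 = span(t) + I0 with I0 ⊆ I, then, I being a
   right ideal, A = span(t_j s_i) + I. *)
From HB Require Import structures.
From mathcomp Require Import all_boot all_order all_algebra.
From Stdlib Require Import Classical.
Set Implicit Arguments. Unset Strict Implicit. Unset Printing Implicit Defensive.
Import GRing.Theory.
Local Open Scope ring_scope.

Section SpanModulo.
Variables (R : pzRingType) (V : lmodType R).

Definition is_subspace (W : V -> Prop) : Prop :=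
  [/\ W 0, (forall x y, W x -> W y -> W (x + y)) &
      (forall (c : R) x, W x -> W (c *: x))].

Definition span_mod (I : V -> Prop) (s : seq V) (x : V) : Prop :=
  exists c : nat -> R, I (x - \sum_(i < size s) c i *: s`_i).

Lemma subspace_sum (W : V -> Prop) (s : seq V) (c : nat -> R) :
  is_subspace W -> (forall i, (i < size s)%N -> W s`_i) ->
  W (\sum_(i < size s) c i *: s`_i).
Proof.
case=> W0 WD WZ Ws; apply: (big_ind W) => // i _.
exact/WZ/Ws/ltn_ord.
Qed.

Lemma span_mod_sub (I J : V -> Prop) s x :
  (forall y, I y -> J y) -> span_mod I s x -> span_mod J s x.
Proof. by move=> IJ [c Ic]; exists c; apply: IJ. Qed.

Variable I : V -> Prop.

Lemma span_mod_nil x : span_mod I [::] x <-> I x.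
Proof.
split; first by case=> c; rewrite big_ord0 subr0.
by move=> Ix; exists (fun _ => 0); rewrite big_ord0 subr0.
Qed.

Lemma span_mod_cons a s x :
  span_mod I (a :: s) x <-> exists d, span_mod I s (x - d *: a).
Proof.
split=> [[c] | [d [c]]].
  by rewrite big_ord_recl opprD addrA => Ic; exists (c 0%N), (fun i => c i.+1).
exists (fun i => if i is j.+1 then c j else d).
by rewrite big_ord_recl opprD addrA.
Qed.

Hypothesis subI : is_subspace I.

Lemma span_mod0 s : span_mod I s 0.
Proof.
case: subI => I0 _ _; exists (fun _ => 0).
by rewrite big1 ?subr0 // => i _; rewrite scale0r.
Qed.

Lemma span_modD s x y : span_mod I s x -> span_mod I s y -> span_mod I s (x + y).
Proof.
case: subI => _ ID _ [c Ic] [d Id]; exists (fun i => c i + d i).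
under eq_bigr do rewrite scalerDl.
by rewrite big_split opprD addrACA; apply: ID.
Qed.

Lemma span_modZ s e x : span_mod I s x -> span_mod I s (e *: x).
Proof.
case: subI => _ _ IZ [c Ic]; exists (fun i => e * c i).
under eq_bigr do rewrite -scalerA.
by rewrite -scaler_sumr -scalerBr; apply: IZ.
Qed.

Lemma span_mod_eqmod s x y : span_mod I s x -> I (y - x) -> span_mod I s y.
Proof.
case: subI => _ ID _ [c Ic] Iyx; exists c.
by rewrite -[y](subrK x) -addrA; apply: ID.
Qed.

Lemma span_mod_cat u v x y :
  span_mod I u x -> span_mod I v y -> span_mod I (u ++ v) (x + y).
Proof.
elim: u x => [|a u IHu] x /=.
  by move=> /span_mod_nil Ix Hy; apply: span_mod_eqmod Hy _; rewrite addrK.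
case/span_mod_cons=> d Hd Hy; apply/span_mod_cons; exists d.
by rewrite addrAC; apply: IHu.
Qed.

End SpanModulo.

(* Induction on s: either W lies in span(s) + I, or some w0 ∈ W has a nonzero
   coefficient c0 on the head a of s, and then w - (d/c0) w0 ∈ W ∩ (span(s) + I)
   for every w ∈ W with coefficient d on a. *)
Lemma span_mod_within (k : fieldType) (V : lmodType k) (I : V -> Prop) s :
  is_subspace I -> forall W : V -> Prop, is_subspace W ->
  (forall w, W w -> span_mod I s w) ->
  exists2 T : seq V, (forall i, (i < size T)%N -> W T`_i) &
    forall w, W w -> span_mod I T w.
Proof.
move=> subI; elim: s => [|a s IHs] W subW Ws.
  by exists [::] => // w /Ws /span_mod_nil Iw; apply/span_mod_nil.
case: (subW) => W0 WD WZ.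
have subWs : is_subspace (fun w => W w /\ span_mod I s w).
  split; first by split=> //; exact: span_mod0.
  - by move=> x y [Wx sx] [Wy sy]; split; [apply: WD | apply: span_modD].
  - by move=> c x [Wx sx]; split; [apply: WZ | apply: span_modZ].
have [T WT TW] := IHs _ subWs (fun w => @proj2 _ _).
have [[w0 [Ww0 sw0]] | Wsub] :=
  classic (exists w0, W w0 /\ ~ span_mod I s w0); last first.
  exists T => [i /WT [] //|w Ww]; apply: TW; split=> //.
  by apply: NNPP => sw; apply: Wsub; exists w.
have [c0 sc0] := (span_mod_cons I a s w0).1 (Ws w0 Ww0).
have c0_neq0 : c0 != 0.
  by apply: contra_notN sw0 => /eqP c0_0; rewrite c0_0 scale0r subr0 in sc0.
exists (w0 :: T) => [[|i] //= /WT [] //|w Ww].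
have [d sd] := (span_mod_cons I a s w).1 (Ws w Ww).
apply/span_mod_cons; exists (d / c0); apply: TW; split.
  by apply: WD => //; rewrite -scaleNr; apply: WZ.
have -> : w - (d / c0) *: w0 = (w - d *: a) + (- (d / c0)) *: (w0 - c0 *: a).
  by rewrite scaleNr scalerBr scalerA divfK // opprB addrA subrK.
by apply: span_modD => //; apply: span_modZ.
Qed.

Section RightMultiplication.
Variables (R : pzRingType) (A : lalgType R) (I : A -> Prop).
Hypothesis IMr : forall x r, I x -> I (x * r).

Lemma span_mod_mulr t b r : span_mod I t b -> span_mod I [seq x * r | x <- t] (b * r).
Proof.
elim: t b => [|a t IHt] b /=.
  by move=> /span_mod_nil Ib; apply/span_mod_nil/IMr.
case/span_mod_cons=> d Hd; apply/span_mod_cons; exists d.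
by rewrite scalerAl -mulrBl; apply: IHt.
Qed.

Lemma span_mod_sum_mulr t s (b : nat -> A) :
  is_subspace I -> (forall i, span_mod I t (b i)) ->
  span_mod I [seq x * y | y <- s, x <- t] (\sum_(i < size s) b i * s`_i).
Proof.
move=> subI; elim: s b => [|y s IHs] b tb /=.
  by rewrite big_ord0; apply: span_mod0.
rewrite big_ord_recl; apply: span_mod_cat => //; first exact: span_mod_mulr.
exact: (IHs (fun i => b i.+1)).
Qed.

End RightMultiplication.

Section FiniteCodimension.
Variables (k : fieldType) (A : algType k).
Implicit Types (I W : A -> Prop).

Lemma subalgebra_subspace (A0 : A -> Prop) : is_subalgebra A0 -> is_subspace A0.
Proof.
by case=> A01 A0D A0Z _; split=> //; rewrite -(scale0r 1); apply: A0Z.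
Qed.

Lemma ideal_subspace I : is_two_sided_ideal_in (fun _ => True) I -> is_subspace I.
Proof.
case=> _ I0 ID IMl _; split=> // c x Ix.
by rewrite -[x]mul1r scalerAl; apply: IMl.
Qed.

Lemma ideal_restrict (A0 : A -> Prop) I : is_subalgebra A0 ->
  is_two_sided_ideal_in (fun _ => True) I ->
  is_two_sided_ideal_in A0 (fun x => A0 x /\ I x).
Proof.
move=> subA0; have [A00 A0D _] := subalgebra_subspace subA0.
case: subA0 => _ _ _ A0M [_ I0 ID IMl IMr]; split=> //.
- by move=> x [].
- by move=> x y [A0x Ix] [A0y Iy]; split; [apply: A0D | apply: ID].
- by move=> a x A0a [A0x Ix]; split; [apply: A0M | apply: IMl].
- by move=> a x A0a [A0x Ix]; split; [apply: A0M | apply: IMr].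
Qed.

Lemma finite_codim_restrict W I : is_subspace W -> is_subspace I ->
  finite_codim (fun _ => True) I -> finite_codim W (fun x => W x /\ I x).
Proof.
move=> subW subI [s [_ sA]].
have [T WT TW] := span_mod_within subI subW (fun w _ => sA w Logic.I).
exists T; split=> // w Ww; have [c Ic] := TW w Ww; exists c; split=> //.
case: (subW) => _ WD WZ; apply: WD => //; rewrite -scaleN1r; apply: WZ.
exact: subspace_sum subW WT.
Qed.

Lemma finite_codim_fin_gen_left (A0 I0 : A -> Prop) I : fin_gen_left A0 ->
  is_subspace I -> (forall x r, I x -> I (x * r)) -> (forall x, I0 x -> I x) ->
  finite_codim A0 I0 -> finite_codim (fun _ => True) I.
Proof.
move=> [s sA] subI IMr I0I [t [_ tA0]].
exists [seq x * y | y <- s, x <- t]; split=> // a _.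
have [b [A0b ->]] := sA a.
apply: (span_mod_sum_mulr IMr _ subI) => i.
exact: span_mod_sub I0I (tA0 _ (A0b i)).
Qed.

End FiniteCodimension.

Theorem lemma4p1 (k : fieldType) (A : algType k) (A0 : A -> Prop)
  (hA0 : is_subalgebra A0)
  (hleft : fin_gen_left A0) (hright : fin_gen_right A0)
  (I : A -> Prop) (hI : is_two_sided_ideal_in (fun _ => True) I) :
  finite_codim (fun _ => True) I <->
  exists I0 : A -> Prop,
    [/\ is_two_sided_ideal_in A0 I0, finite_codim A0 I0 &
        (forall x, I0 x -> I x)].
Proof.
have subI := ideal_subspace hI.
split=> [codimI | [I0 [_ codimI0 I0I]]].
  exists (fun x => A0 x /\ I x); split; first exact: ideal_restrict.
    exact: finite_codim_restrict (subalgebra_subspace hA0) subI codimI.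
  by move=> x [].
have [_ _ _ _ IMr] := hI.
exact: finite_codim_fin_gen_left hleft subI (fun x r => IMr r x Logic.I) I0I codimI0.
Qed.
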